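(* For every $\epsilon$ with $0<\epsilon<1/4$ and every integer $k\ge 1$, $$R(K_4^*,k)\le (1+\epsilon)^k\epsilon^{-1}k!.$$ In particular, $R(K_4^*,k)\le (k-1)e(1+o(1))k!$ as $k\to\infty$.
   Context: For a family $\mathcal{G}$ of graphs, $R(\mathcal{G},k)$ is the smallest $n$ such that every coloring of the edges of $K_n$ with $k$ colors contains a monochromatic subgraph isomorphic to some member of $\mathcal{G}$. $K_4^*$ is the family of graphs consisting of: $K_4$; the graph obtained from $K_4$ minus an edge by attaching a pendant edge at one of its two vertices of degree $2$; and the triangle with a pendant edge attached at each of its three vertices. (Equivalently, for a vertex $v$ of $K_4$ with neighbors $q_1,q_2,q_3$, $K_4^*$ is the family of graphs obtained from the triangle $K_4-v$ by adding, for each $i$, an edge $q_ir_i$ not in the triangle, with $r_i$ a vertex of the triangle or a new vertex, new vertices possibly shared, the three added edges pairwise distinct.) *)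

From HB Require Import structures.
From mathcomp Require Import all_boot all_order all_algebra.
Set Implicit Arguments. Unset Strict Implicit. Unset Printing Implicit Defensive.

(* A simple graph H is given by a symmetric irreflexive relation on a finite
   vertex type. An edge-colouring of K_n with k colours is a symmetric map
   c : 'I_n -> 'I_n -> 'I_k (values on the diagonal are irrelevant). *)

Definition mono_copy (V : finType) (H : rel V) (n k : nat)
  (c : 'I_n -> 'I_n -> 'I_k) : Prop :=
  exists (f : V -> 'I_n) (i : 'I_k),
    injective f /\ forall x y : V, H x y -> c (f x) (f y) = i.

Definition K4 : rel 'I_4 := fun x y => x != y.

(* K_4 minus the edge {2,3} (vertices 2,3 have degree 2), plus the pendant
   edge {2,4}. *)
Definition K4e_pend_edge (a b : nat) : bool :=
  [|| (a < 4) && (b < 4) && (a != b) && ~~ ((a == 2) && (b == 3))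
                                     && ~~ ((a == 3) && (b == 2)),
      (a == 2) && (b == 4) | (a == 4) && (b == 2)].
Definition K4e_pend : rel 'I_5 := fun x y => K4e_pend_edge x y.

(* Triangle 0,1,2 with pendant edges {0,3}, {1,4}, {2,5}. *)
Definition tri_pend_edge (a b : nat) : bool :=
  [|| (a < 3) && (b < 3) && (a != b),
      (b == a + 3) && (a < 3) | (a == b + 3) && (b < 3)].
Definition tri_pend : rel 'I_6 := fun x y => tri_pend_edge x y.

Definition mono_K4star (n k : nat) (c : 'I_n -> 'I_n -> 'I_k) : Prop :=
  mono_copy K4 c \/ mono_copy K4e_pend c \/ mono_copy tri_pend c.

Definition ramsey_K4star_prop (k n : nat) : Prop :=
  forall c : 'I_n -> 'I_n -> 'I_k,
    (forall x y, c x y = c y x) -> mono_K4star c.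

From mathcomp Require Import all_boot all_order all_algebra.
From mathcomp Require Import zify lra.
From Stdlib Require Import Classical.
(* Call a monochromatic triangle of colour i rich if each of its vertices has
   at least three colour-i neighbours.  The extra neighbours of the three
   vertices either all coincide (K_4), two of them coincide (K_4 minus an edge
   plus a pendant edge) or are all distinct (triangle with three pendant
   edges), so a rich triangle yields a member of K_4^*.

   A clique coloured with a colours on a(m+1)+2 vertices contains a rich
   triangle, where m is the bound for a-1 colours.  Otherwise fix a vertex v
   and a colour i: the colour-i neighbours of v with colour-i degree at least 3
   span no edge of colour i (it would close a rich triangle), so by induction
   there are fewer than m of them; the remaining ones have colour-i degree at
   most 2, and double counting gives a vertex v with at most 2a such
   neighbours over all colours.  Hence the clique has at most a(m+1)+1
   vertices.  The resulting bound is at most (k+4) k!, and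
   (k+4) eps <= 1 + k eps <= (1+eps)^k since 4 eps < 1. *)

Set Implicit Arguments. Unset Strict Implicit. Unset Printing Implicit Defensive.
Import Order.TTheory GRing.Theory Num.Theory.

Lemma card_set_sum (T : finType) (S : {set T}) (p : pred T) :
  #|[set w in S | p w]| = \sum_(w in S) p w.
Proof.
rewrite -sum1_card big_mkcond [RHS]big_mkcond /=; apply: eq_bigr => w _.
by rewrite inE; case: (w \in S); case: (p w).
Qed.

Lemma exists_le_mean (T : finType) (S : {set T}) (f : T -> nat) b :
  S != set0 -> \sum_(v in S) f v <= b * #|S| -> exists2 v, v \in S & f v <= b.
Proof.
move=> S_neq0 sum_le; case: (pickP [pred v in S | f v <= b]) => [v /andP[]|small].
  by exists v.
have: \sum_(v in S) b.+1 <= \sum_(v in S) f v.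
  by apply: leq_sum => v vS; move: (small v); rewrite /= vS ltnNge => /negbT.
rewrite sum_nat_const => /leq_trans/(_ sum_le).
by rewrite mulnC leq_pmul2r ?ltnn // card_gt0.
Qed.

Section Colouring.

Variables (n k : nat) (c : 'I_n -> 'I_n -> 'I_k).

Definition nbhd (S : {set 'I_n}) (x : 'I_n) (i : 'I_k) : {set 'I_n} :=
  [set w in S | (w != x) && (c x w == i)].

Definition rich_triangle (S : {set 'I_n}) : Prop :=
  exists i x y z,
    [/\ [/\ x \in S, y \in S & z \in S], [/\ x != y, y != z & x != z],
        [/\ c x y = i, c y z = i & c x z = i] &
        [/\ 2 < #|nbhd S x i|, 2 < #|nbhd S y i| & 2 < #|nbhd S z i|]].

Lemma subset_nbhd (S T : {set 'I_n}) x i :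
  S \subset T -> nbhd S x i \subset nbhd T x i.
Proof.
move=> sST; apply/subsetP => w; rewrite !inE.
by case/andP=> /(subsetP sST) -> ->.
Qed.

Lemma nbhd_subset (S : {set 'I_n}) x i : nbhd S x i \subset S.
Proof. by apply/subsetP => w; rewrite inE => /andP []. Qed.

Lemma rich_triangleS (S T : {set 'I_n}) :
  S \subset T -> rich_triangle S -> rich_triangle T.
Proof.
move=> sST [i [x [y [z [[xS yS zS] neq col [dx dy dz]]]]]].
have deg_mono u : 2 < #|nbhd S u i| -> 2 < #|nbhd T u i|.
  by move/leq_trans; apply; apply/subset_leq_card/subset_nbhd.
exists i, x, y, z; split=> //; first by split; apply: (subsetP sST).
by split; apply: deg_mono.
Qed.

Lemma nbhd_avoid2 (S : {set 'I_n}) x i (y z : 'I_n) :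
  2 < #|nbhd S x i| -> exists r, [/\ r != x, c x r = i, r != y & r != z].
Proof.
set A := nbhd S x i => big_nbhd.
have /card_gt0P [r] : 0 < #|A :\: [set y; z]|.
  have : #|A :&: [set y; z]| <= 2.
    by rewrite (leq_trans (subset_leq_card (subsetIr _ _))) // cards2; case: (_ != _).
  move/(leq_add)/(_ (leqnn #|A :\: [set y; z]|)); rewrite cardsID => le_A.
  by rewrite -(ltn_add2l 2) addn0 (leq_trans big_nbhd le_A).
by rewrite !inE negb_or => /andP [/andP [ry rz] /andP [_ /andP [rx /eqP cr]]]; exists r.
Qed.

Hypothesis c_sym : forall x y, c x y = c y x.

Lemma mono_copy_nth m (H : rel 'I_m) (s : seq 'I_n) x0 i :
  size s = m -> uniq s ->
  (forall a b : 'I_m, H a b -> c (nth x0 s a) (nth x0 s b) = i) -> mono_copy H c.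
Proof.
move=> size_s uniq_s edges; exists (fun j : 'I_m => nth x0 s j), i; split=> //.
by move=> a b /eqP; rewrite nth_uniq ?size_s // => /eqP /val_inj.
Qed.

Ltac solve_uniq := rewrite /= !inE !negb_or;
  repeat (apply/andP; split); (done || by rewrite eq_sym).

Ltac solve_edges :=
  move=> [[|[|[|[|[|[|a]]]]]] ?] [[|[|[|[|[|[|b]]]]]] ?] //=;
  try (rewrite /K4 -(inj_eq val_inj) /=); move=> //= _;
  (done || by rewrite c_sym).

Lemma mono_K4 i (x y z r : 'I_n) :
  x != y -> y != z -> x != z -> r != x -> r != y -> r != z ->
  c x y = i -> c y z = i -> c x z = i -> c x r = i -> c y r = i -> c z r = i ->
  mono_copy K4 c.
Proof.
move=> *; apply: (@mono_copy_nth _ _ [:: x; y; z; r] x i) => //; first solve_uniq.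
solve_edges.
Qed.

Lemma mono_K4e_pend i (x y z r w : 'I_n) :
  x != y -> y != z -> x != z -> r != x -> r != y -> r != z ->
  w != x -> w != y -> w != z -> w != r ->
  c x y = i -> c y z = i -> c x z = i -> c x r = i -> c y r = i -> c z w = i ->
  mono_copy K4e_pend c.
Proof.
move=> *; apply: (@mono_copy_nth _ _ [:: x; y; z; r; w] x i) => //; first solve_uniq.
solve_edges.
Qed.

Lemma mono_tri_pend i (x y z u v w : 'I_n) :
  x != y -> y != z -> x != z -> u != x -> u != y -> u != z ->
  v != x -> v != y -> v != z -> v != u ->
  w != x -> w != y -> w != z -> w != u -> w != v ->
  c x y = i -> c y z = i -> c x z = i -> c x u = i -> c y v = i -> c z w = i ->
  mono_copy tri_pend c.
Proof.
move=> *; apply: (@mono_copy_nth _ _ [:: x; y; z; u; v; w] x i) => //; first solve_uniq.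
solve_edges.
Qed.

Lemma rich_triangle_K4star : rich_triangle setT -> mono_K4star c.
Proof.
move=> [i [x [y [z [_ [xy yz xz] [cxy cyz cxz] [dx dy dz]]]]]].
have [u [ux cxu uy uz]] := nbhd_avoid2 y z dx.
have [v [vy cyv vx vz]] := nbhd_avoid2 x z dy.
have [w [wz czw wx wy]] := nbhd_avoid2 x y dz.
have cyx : c y x = i by rewrite c_sym.
have czy : c z y = i by rewrite c_sym.
have czx : c z x = i by rewrite c_sym.
have [euv|uv] := eqVneq u v.
  subst v; have [euw|uw] := eqVneq u w.
    by subst w; left; apply: (@mono_K4 i x y z u) => //; rewrite c_sym.
  by right; left; apply: (@mono_K4e_pend i x y z u w) => //; rewrite eq_sym.
have [euw|uw] := eqVneq u w.
  subst w; right; left; apply: (@mono_K4e_pend i x z y u v) => //;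
    by rewrite ?c_sym // eq_sym.
have [evw|vw] := eqVneq v w.
  subst w; right; left; apply: (@mono_K4e_pend i y z x v u) => //;
    by rewrite ?c_sym // eq_sym.
by right; right; apply: (@mono_tri_pend i x y z u v w); rewrite // eq_sym.
Qed.

Definition forces_rich_triangle (a m : nat) : Prop :=
  forall (S : {set 'I_n}) (A : {set 'I_k}), #|A| <= a -> m <= #|S| ->
  {in S &, forall x y, x != y -> c x y \in A} -> rich_triangle S.

Lemma forces_rich_triangle1 : forces_rich_triangle 1 4.
Proof.
move=> S A A_le1 S_ge4 colA.
have /card_gt2P [x [y [z [[xS yS zS] [xy yz zx]]]]] : 2 < #|S| by apply: leq_trans S_ge4.
have mono p q : p \in S -> q \in S -> p != q -> c p q = c x y.
  by move=> pS qS pq; apply/(card_le1_eqP A_le1); apply: colA.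
have deg p : p \in S -> 2 < #|nbhd S p (c x y)|.
  move=> pS; have -> : nbhd S p (c x y) = S :\ p.
    apply/setP => q; rewrite !inE; have [->|qp] := eqVneq q p; first by rewrite andbF.
    by case qS: (q \in S); rewrite //= mono ?eqxx // eq_sym.
  by move: S_ge4; rewrite (cardsD1 p) pS add1n ltnS.
exists (c x y), x, y, z; split; split; rewrite // 1?eq_sym ?deg //.
all: by apply: mono; rewrite // eq_sym.
Qed.

Definition low_deg (S : {set 'I_n}) (i : 'I_k) : {set 'I_n} :=
  [set w in S | #|nbhd S w i| <= 2].

Lemma rich_triangle_nbhd (S : {set 'I_n}) v i x y :
  v \in S -> 2 < #|nbhd S v i| ->
  x \in nbhd S v i :\: low_deg S i -> y \in nbhd S v i :\: low_deg S i ->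
  x != y -> c x y = i -> rich_triangle S.
Proof.
rewrite !inE => vS dv /and3P [x_high xS /andP [xv /eqP cvx]].
move=> /and3P [y_high yS /andP [yv /eqP cvy]] xy cxy.
rewrite xS /= -ltnNge in x_high; rewrite yS /= -ltnNge in y_high.
by exists i, v, x, y; split; split; rewrite // 1?eq_sym.
Qed.

Lemma card_nbhd_le_low a m (S : {set 'I_n}) (A : {set 'I_k}) i v :
  2 < m -> forces_rich_triangle a m -> ~ rich_triangle S ->
  #|A| <= a.+1 -> {in S &, forall x y, x != y -> c x y \in A} ->
  i \in A -> v \in S ->
  #|nbhd S v i| <= m.-1 + #|nbhd (low_deg S i) v i|.
Proof.
move=> m_gt2 forces_m not_rich A_le colA iA vS.
set T := nbhd S v i :\: low_deg S i.
have T_le : #|T| <= m.-1.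
  rewrite leqNgt; apply/negP => T_gt.
  have T_ge : m <= #|T| by rewrite -(ltn_predK m_gt2).
  have dv : 2 < #|nbhd S v i|.
    by rewrite (leq_trans m_gt2 (leq_trans T_ge _)) // subset_leq_card ?subsetDl.
  have sTS : T \subset S := subset_trans (subsetDl _ _) (nbhd_subset S v i).
  apply/not_rich/(rich_triangleS sTS)/(forces_m T (A :\ i)) => //.
    by move: A_le; rewrite (cardsD1 i) iA.
  move=> x y xT yT xy; rewrite in_setD1 colA ?(subsetP sTS) // andbT.
  by apply/eqP => cxy; apply: not_rich; exact: rich_triangle_nbhd vS dv xT yT xy cxy.
have nbhd_sub : nbhd S v i \subset T :|: nbhd (low_deg S i) v i.
  apply/subsetP => w; rewrite !inE => /andP [wS /andP [wv cw]].
  by rewrite wS wv cw /=; case: (_ <= 2); rewrite ?orbT.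
rewrite (leq_trans (subset_leq_card nbhd_sub)) // (leq_trans (leq_card_setU _ _).1) //.
by rewrite leq_add2r.
Qed.

Lemma card_le_sum_nbhd (S : {set 'I_n}) (A : {set 'I_k}) v :
  {in S &, forall x y, x != y -> c x y \in A} -> v \in S ->
  #|S| <= (\sum_(i in A) #|nbhd S v i|).+1.
Proof.
move=> colA vS; rewrite (cardsD1 v) vS add1n ltnS -sum1_card.
under [leqRHS]eq_bigr do rewrite card_set_sum.
rewrite exchange_big /= [leqRHS](big_setD1 v vS) /= (leq_trans _ (leq_addl _ _)) //.
apply: leq_sum => w; rewrite in_setD1 => /andP [wv wS].
rewrite (bigD1 (c v w)) /=; last by rewrite colA // eq_sym.
by rewrite wv eqxx.
Qed.

Lemma sum_card_nbhdC (S T : {set 'I_n}) i :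
  \sum_(v in S) #|nbhd T v i| = \sum_(w in T) #|nbhd S w i|.
Proof.
under eq_bigr do rewrite card_set_sum; rewrite exchange_big /=.
by apply: eq_bigr => w _; rewrite card_set_sum; apply: eq_bigr => u _; rewrite eq_sym c_sym.
Qed.

Lemma sum_card_nbhd_low (S : {set 'I_n}) i :
  \sum_(v in S) #|nbhd (low_deg S i) v i| <= 2 * #|S|.
Proof.
rewrite sum_card_nbhdC (@leq_trans (\sum_(w in low_deg S i) 2)) //.
  by apply: leq_sum => w; rewrite inE => /andP [].
rewrite sum_nat_const mulnC leq_mul2l /= subset_leq_card //.
by apply/subsetP => w; rewrite inE => /andP [].
Qed.

Lemma forces_rich_triangleS a m :
  2 < m -> forces_rich_triangle a m -> forces_rich_triangle a.+1 (a.+1 * m.+1 + 2).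
Proof.
move=> m_gt2 forces_m S A A_le S_ge colA.
apply: NNPP => not_rich.
have S_neq0 : S != set0 by rewrite -card_gt0 (leq_trans _ S_ge) ?addn2.
have [v vS small_v] : exists2 v, v \in S &
    \sum_(i in A) #|nbhd (low_deg S i) v i| <= 2 * #|A|.
  apply: exists_le_mean => //; rewrite exchange_big /= mulnAC mulnC -sum_nat_const.
  by apply: leq_sum => i _; apply: sum_card_nbhd_low.
have S_le := card_le_sum_nbhd colA vS.
have : \sum_(i in A) #|nbhd S v i| <= \sum_(i in A) (m.-1 + #|nbhd (low_deg S i) v i|).
  by apply: leq_sum => i iA; exact: card_nbhd_le_low m_gt2 forces_m not_rich A_le colA iA vS.
rewrite big_split sum_nat_const /= => sum_le.
have := leq_mul A_le (leqnn m.+1); move: S_ge S_le sum_le small_v.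
move: (\sum_(i in A) #|nbhd (low_deg S i) v i|) (\sum_(i in A) #|nbhd S v i|) #|S| #|A|.
by move=> low_sum deg_sum nS nA; nia.
Qed.

End Colouring.

Fixpoint rich_size (j : nat) : nat :=
  if j is j'.+1 then j.+1 * (rich_size j').+1 + 2 else 4.

Lemma rich_size_gt2 j : 2 < rich_size j.
Proof. by case: j => //= j; rewrite addn2. Qed.

Lemma forces_rich_size n k (c : 'I_n -> 'I_n -> 'I_k) :
  (forall x y, c x y = c y x) -> forall j, forces_rich_triangle c j.+1 (rich_size j).
Proof.
move=> c_sym; elim=> [|j IHj]; first exact: forces_rich_triangle1.
by have := forces_rich_triangleS c_sym (rich_size_gt2 j) IHj.
Qed.

Lemma rich_size_le j : rich_size j <= (j + 5) * j.+1`!.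
Proof.
case: j => [|j] //; elim: j => [|j IHj] //.
have fact_ge2 : 2 <= j.+2`! by rewrite factS; have := fact_gt0 j.+1; nia.
rewrite [rich_size _]/= -/(rich_size j.+1) [j.+3`!]factS.
by move: IHj fact_ge2; move: (rich_size j.+1) j.+2`! => r f; nia.
Qed.

Local Open Scope ring_scope.

Lemma bernoulli_ler (R : realFieldType) (e : R) k :
  0 <= e -> 1 + k%:R * e <= (1 + e) ^+ k.
Proof.
move=> e_ge0; elim: k => [|k IHk]; first by rewrite expr0 mul0r addr0.
rewrite exprS -natr1.
have ke_ge0 : 0 <= k%:R * e by rewrite mulr_ge0 ?ler0n.
have := ler_wpM2l (_ : 0 <= 1 + e) IHk; nra.
Qed.

Lemma natDl_le_expr_div (R : realFieldType) (eps : R) k :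
  0 < eps -> eps < 4^-1 -> (k + 4)%:R <= (1 + eps) ^+ k / eps.
Proof.
move=> eps_gt0 eps_lt; rewrite ler_pdivlMr // natrD.
have : 4 * eps < 1 by lra.
have := bernoulli_ler k (ltW eps_gt0); nra.
Qed.

Theorem lemma1 (R : realFieldType) (eps : R) (k : nat) :
  0 < eps -> eps < 4^-1 -> (1 <= k)%N ->
  exists n : nat,
    (n%:R <= (1 + eps) ^+ k / eps * (k`!)%:R) /\ ramsey_K4star_prop k n.
Proof.
move=> eps_gt0 eps_lt; case: k => [|j] // _; exists (rich_size j); split.
  apply: (@le_trans _ _ ((j.+1 + 4)%N%:R * (j.+1)`!%:R)).
    by rewrite -natrM ler_nat addSnnS rich_size_le.
  by rewrite ler_wpM2r ?ler0n ?natDl_le_expr_div.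
move=> c c_sym; apply: rich_triangle_K4star => //.
apply: (@forces_rich_size _ _ c c_sym j setT setT) => [||x y _ _ _];
  by rewrite ?cardsT ?card_ord ?inE.
Qed.
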